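(* Let $m\ge 2$. The following random substitution subshifts are semi-mixing: (1) the random Fibonacci subshift $X_1 = X_{\vartheta_1}$, with respect to $\mathcal{S}_1=\{ab,ba\}$; (2) the random tribonacci subshift $X_\tau$, with respect to $\mathcal{S}_\tau=\{ab,ba,ac,ca\}$; (3) the degree-$m$ random metallic mean subshift $X_m = X_{\vartheta_m}$, with respect to $\mathcal{S}_m=\{a^iba^{m-i}\mid 0\le i\le m\}$.
   Context: Words: for a finite alphabet $\mathcal{A}$, $\mathcal{A}^+$ is the set of non-empty finite words; $u^i$ is the $i$-fold concatenation ($u^0$ the empty word); $v\prec w$ means $v$ is a (contiguous) subword of $w$. For sets of words $A,B$, $AB=\{uv\mid u\in A, v\in B\}$. A random substitution is a map $\vartheta$ assigning to each letter $a\in\mathcal{A}$ a non-empty finite set $\vartheta(a)\subseteq\mathcal{A}^+$; it is extended to words by $\vartheta(w_1\cdots w_k)=\vartheta(w_1)\cdots\vartheta(w_k)$ (set concatenation) and to sets by $\vartheta(A)=\bigcup_{w\in A}\vartheta(w)$; $\vartheta^k$ denotes the $k$-fold iterate. A word $u$ is $\vartheta$-legal if there are $k\ge 0$, a letter $a$ and $w\in\vartheta^k(a)$ with $u\prec w$. The RS-subshift is $X_\vartheta=\{x\in\mathcal{A}^{\mathbb{Z}}\mid \text{every finite subword of } x \text{ is } \vartheta\text{-legal}\}$ with the left shift $\sigma$. Its language $\mathcal{L}$ is the set of all finite subwords of elements of $X_\vartheta$, and $\mathcal{L}^\ell$ the set of those of length $\ell$. Semi-mixing (symbolic form, equivalent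 to the dynamical definition: there is a proper clopen $U$ such that for every nonempty open $V$ there is $N$ with $\sigma^n(V)\cap U\neq\varnothing$ for all $n\ge N$): a subshift is semi-mixing with respect to a set $\mathcal{S}\subsetneq\mathcal{L}^\ell$ (for some length $\ell$) if for every $w\in\mathcal{L}$ there is $N\in\mathbb{N}$ such that for every $n\ge N$ there exist a word $u$ of length $n$ and $s\in\mathcal{S}$ with $wus\in\mathcal{L}$. Random Fibonacci substitution on $\{a,b\}$: $\vartheta_1\colon a\mapsto\{ab,ba\},\ b\mapsto\{a\}$. Random tribonacci substitution on $\{a,b,c\}$: $\tau\colon a\mapsto\{ab,ba\},\ b\mapsto\{ac,ca\},\ c\mapsto\{a\}$. Degree-$m$ random metallic mean substitution on $\{a,b\}$: $\vartheta_m\colon a\mapsto\{a^iba^{m-i}\mid 0\le i\le m\},\ b\mapsto\{a\}$. *)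

From HB Require Import structures.
From mathcomp Require Import all_boot all_order all_algebra.
Set Implicit Arguments. Unset Strict Implicit. Unset Printing Implicit Defensive.
Import GRing.Theory Num.Theory.

Definition rsubst (A : eqType) := A -> seq (seq A).

Fixpoint in_subst (A : eqType) (th : rsubst A) (w v : seq A) : Prop :=
  match w with
  | [::] => v = [::]
  | c :: w' => exists p q, [/\ v = p ++ q, p \in th c & in_subst th w' q]
  end.

Fixpoint in_subst_iter (A : eqType) (th : rsubst A) (k : nat) (w v : seq A) : Prop :=
  match k with
  | 0 => v = w
  | k'.+1 => exists v', in_subst_iter th k' w v' /\ in_subst th v' v
  end.

Definition legal (A : eqType) (th : rsubst A) (u : seq A) : Prop :=
  exists k (c : A) w, in_subst_iter th k [:: c] w /\ infix u w.

Definition subword (A : Type) (x : int -> A) (i : int) (n : nat) : seq A :=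
  mkseq (fun k => x (i + k%:Z)%R) n.

Definition in_RS_subshift (A : eqType) (th : rsubst A) (x : int -> A) : Prop :=
  forall i n, legal th (subword x i n).

Definition lang (A : eqType) (th : rsubst A) (w : seq A) : Prop :=
  exists x, in_RS_subshift th x /\ exists i, w = subword x i (size w).

Definition semi_mixing_wrt (A : eqType) (th : rsubst A) (S : seq (seq A)) : Prop :=
  exists l : nat,
    (forall s, s \in S -> size s = l /\ lang th s) /\
    (exists w, size w = l /\ lang th w /\ w \notin S) /\
    (forall w, lang th w -> exists N : nat, forall n, N <= n ->
       exists u s, [/\ size u = n, s \in S & lang th (w ++ u ++ s)]).

Inductive ab := a_ | b_.
Definition ab_eqb (x y : ab) : bool :=
  match x, y with a_, a_ | b_, b_ => true | _, _ => false end.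
Lemma ab_eqP : Equality.axiom ab_eqb.
Proof. by case; case; constructor. Qed.
HB.instance Definition _ := hasDecEq.Build ab ab_eqP.

Inductive abc := a3 | b3 | c3.
Definition abc_eqb (x y : abc) : bool :=
  match x, y with a3, a3 | b3, b3 | c3, c3 => true | _, _ => false end.
Lemma abc_eqP : Equality.axiom abc_eqb.
Proof. by case; case; constructor. Qed.
HB.instance Definition _ := hasDecEq.Build abc abc_eqP.

Definition fib_subst : rsubst ab :=
  fun c => match c with a_ => [:: [:: a_; b_]; [:: b_; a_]] | b_ => [:: [:: a_]] end.

Definition trib_subst : rsubst abc :=
  fun c => match c with
  | a3 => [:: [:: a3; b3]; [:: b3; a3]]
  | b3 => [:: [:: a3; c3]; [:: c3; a3]]
  | c3 => [:: [:: a3]] end.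

Definition metallic_words (m : nat) : seq (seq ab) :=
  [seq nseq i a_ ++ b_ :: nseq (m - i) a_ | i <- iota 0 m.+1].

Definition metallic_subst (m : nat) : rsubst ab :=
  fun c => match c with a_ => metallic_words m | b_ => [:: [:: a_]] end.

(* Each of the three substitutions has a marginal [rho], one fixed choice per
   letter, whose images all begin with [a] and such that [a] lies strictly
   inside some [rho^k(a)].  Iterating [rho^k] around a realisation of [a]
   nests it in ever longer legal words converging to a point of the subshift,
   so every legal word belongs to the language.  A legal word [w] occurs in a
   one-step image [v] of some realisation of [a]; since [rho^n(a) = a D] with
   [|D| >= n], the word [v] can be followed by a realisation of [rho(D)], and a
   choice made at two consecutive letters of [rho(D)] places a word of [S] at
   any prescribed distance from [w]. *)

From mathcomp Require Import all_boot all_algebra zify.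
Set Implicit Arguments. Unset Strict Implicit. Unset Printing Implicit Defensive.

Definition dsub (A : Type) (rho : A -> seq A) (w : seq A) : seq A :=
  flatten (map rho w).

Section DeterministicSubstitution.
Variables (A : Type) (rho : A -> seq A).

Lemma dsub_cons c w : dsub rho (c :: w) = rho c ++ dsub rho w.
Proof. by []. Qed.

Lemma dsub_cat w1 w2 : dsub rho (w1 ++ w2) = dsub rho w1 ++ dsub rho w2.
Proof. by rewrite /dsub map_cat flatten_cat. Qed.

Lemma iter_dsub_cat k w1 w2 :
  iter k (dsub rho) (w1 ++ w2) = iter k (dsub rho) w1 ++ iter k (dsub rho) w2.
Proof. by elim: k => //= k ->; rewrite dsub_cat. Qed.

Hypothesis rho_nonempty : forall c, 0 < size (rho c).

Lemma size_dsub w : size w <= size (dsub rho w).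
Proof.
elim: w => //= c w IH; rewrite dsub_cons size_cat.
by have := rho_nonempty c; lia.
Qed.

Lemma size_iter_dsub k w : size w <= size (iter k (dsub rho) w).
Proof. by elim: k => //= k IH; apply: leq_trans IH (size_dsub _). Qed.

End DeterministicSubstitution.

Section RandomSubstitution.
Variables (A : eqType) (th : rsubst A).

Lemma in_subst_cons c p w q :
  p \in th c -> in_subst th w q -> in_subst th (c :: w) (p ++ q).
Proof. by move=> Hp Hq; exists p, q. Qed.

Lemma in_subst_cat w1 w2 v1 v2 :
  in_subst th w1 v1 -> in_subst th w2 v2 -> in_subst th (w1 ++ w2) (v1 ++ v2).
Proof.
elim: w1 v1 => [|c w IH] v1 /=; first by move=> ->.
move=> [p [q [-> Hp Hq]]] H2; rewrite -catA.
by apply: in_subst_cons Hp _; apply: IH.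
Qed.

Lemma in_subst_iter_cat k w1 w2 v1 v2 :
  in_subst_iter th k w1 v1 -> in_subst_iter th k w2 v2 ->
  in_subst_iter th k (w1 ++ w2) (v1 ++ v2).
Proof.
elim: k v1 v2 => [|k IH] v1 v2 /=; first by move=> -> ->.
move=> [x [H1 H1']] [y [H2 H2']]; exists (x ++ y).
by split; [apply: IH | apply: in_subst_cat].
Qed.

Lemma in_subst_iterD j k w v u :
  in_subst_iter th j w v -> in_subst_iter th k v u ->
  in_subst_iter th (k + j) w u.
Proof.
move=> Hj; elim: k u => [|k IH] u /=; first by move=> ->.
by move=> [x [Hx Hxu]]; exists x; split => //; apply: IH.
Qed.

Lemma in_subst_iter1 w v : in_subst th w v -> in_subst_iter th 1 w v.
Proof. by exists w. Qed.

Lemma legal_infix w u : legal th w -> infix u w -> legal th u.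
Proof.
move=> [K [c [R [HR Hw]]]] Hu; exists K, c, R.
by split => //; apply: infix_trans Hu Hw.
Qed.

Lemma in_subst_letter c s : s \in th c -> in_subst th [:: c] s.
Proof. by move=> Hs; rewrite -[s]cats0; apply: in_subst_cons. Qed.

Lemma legal_image_letter c s : s \in th c -> legal th s.
Proof.
move=> Hs; exists 1, c, s; split; last exact: infix_refl.
by apply/in_subst_iter1/in_subst_letter.
Qed.

Lemma lang_legal w : lang th w -> legal th w.
Proof. by move=> [x [Hx [i ->]]]; apply: Hx. Qed.

Variable rho : A -> seq A.
Hypothesis rho_mem : forall c, rho c \in th c.

Lemma in_subst_dsub w : in_subst th w (dsub rho w).
Proof. by elim: w => //= c w IH; apply: in_subst_cons. Qed.

Lemma in_subst_iter_dsub k w : in_subst_iter th k w (iter k (dsub rho) w).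
Proof.
elim: k => //= k IH; exists (iter k (dsub rho) w).
by split => //; apply: in_subst_dsub.
Qed.

End RandomSubstitution.

(* Computable enumerations of the realisations of a word and of the [k]-th
   images of a letter, which reduce the concrete cases to evaluation. *)
Fixpoint images (A : eqType) (th : rsubst A) (u : seq A) : seq (seq A) :=
  if u is c :: u' then [seq p ++ q | p <- th c, q <- images th u'] else [:: [::]].

Fixpoint iter_images (A : eqType) (th : rsubst A) (k : nat) (c : A) :=
  if k is k'.+1 then flatten (map (images th) (iter_images th k' c))
  else [:: [:: c]].

Section Images.
Variables (A : eqType) (th : rsubst A).

Lemma in_subst_images u t : t \in images th u -> in_subst th u t.
Proof.
elim: u t => [|c u IH] t /=; first by rewrite inE => /eqP.
by case/allpairsP => -[p q] /= [Hp Hq ->]; apply: in_subst_cons Hp (IH _ Hq).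
Qed.

Lemma in_subst_iter_images k c t :
  t \in iter_images th k c -> in_subst_iter th k [:: c] t.
Proof.
elim: k t => [|k IH] t /=; first by rewrite inE => /eqP.
case/flatten_mapP => v Hv Ht; exists v.
by split; [apply: IH | apply: in_subst_images].
Qed.

Lemma legal_iter_images k c u : has (infix u) (iter_images th k c) -> legal th u.
Proof.
by case/hasP => t Ht Hu; exists k, c, t; split => //; apply: in_subst_iter_images.
Qed.

End Images.

Lemma mkseq_nth_drop (T : Type) (x0 : T) (s : seq T) b n : b + n <= size s ->
  mkseq (fun k => nth x0 s (b + k)) n = take n (drop b s).
Proof.
move=> H; apply: (@eq_from_nth _ x0).
  by rewrite size_mkseq size_take size_drop; case: ltnP => //; lia.
by move=> k; rewrite size_mkseq => Hk; rewrite nth_mkseq // nth_take // nth_drop.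
Qed.

Fixpoint nest (A : Type) (R : seq A) (Pf Sf : nat -> seq A) i :=
  if i is i'.+1 then Pf i' ++ nest R Pf Sf i' ++ Sf i' else R.

Section NestedWords.
Variables (A : eqType) (th : rsubst A) (d : A) (R : seq A) (Pf Sf : nat -> seq A).
Local Notation W := (nest R Pf Sf).
Hypothesis Pf_nonempty : forall i, 0 < size (Pf i).
Hypothesis Sf_nonempty : forall i, 0 < size (Sf i).

(* [offset i] is the position of [R] inside [W i]. *)
Fixpoint offset i := if i is i'.+1 then offset i' + size (Pf i') else 0.

Lemma leq_offset i : i <= offset i.
Proof. by elim: i => //= i IH; have := Pf_nonempty i; lia. Qed.

Lemma size_nested i : offset i + i <= size (W i).
Proof.
elim: i => //= i IH; rewrite !size_cat.
by have := Pf_nonempty i; have := Sf_nonempty i; lia.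
Qed.

Lemma nested_decomp i j : exists Pre Suf,
  W (j + i) = Pre ++ W i ++ Suf /\ size Pre + offset i = offset (j + i).
Proof.
elim: j => [|j [Pre [Suf [E1 E2]]]]; first by exists [::], [::]; rewrite cats0.
exists (Pf (j + i) ++ Pre), (Suf ++ Sf (j + i)); split.
  by rewrite addSn /= E1 !catA.
by rewrite addSn /= size_cat -E2; lia.
Qed.

(* The words [W i], aligned so that [R] starts at the origin, converge to
   this bi-infinite sequence: position [z] is already fixed in [W |z|.+1]. *)
Definition nested_limit (z : int) : A :=
  nth d (W (absz z).+1) (absz (z + (offset (absz z).+1)%:Z)%R).

Lemma nested_limitE z M : absz z < M ->
  nested_limit z = nth d (W M) (absz (z + (offset M)%:Z)%R).
Proof.
move=> HM; rewrite /nested_limit.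
have [Pre [Suf [E1 E2]]] := nested_decomp (absz z).+1 (M - (absz z).+1).
rewrite subnK // in E1 E2; rewrite E1.
have h1 := leq_offset (absz z).+1; have h2 := size_nested (absz z).+1.
have -> : absz (z + (offset M)%:Z)%R
    = size Pre + absz (z + (offset (absz z).+1)%:Z)%R by lia.
rewrite nth_cat ifN -?leqNgt ?leq_addr // addKn nth_cat ifT //.
by lia.
Qed.

Lemma subword_nested_limit i n : subword nested_limit i n =
  take n (drop (absz (i + (offset (absz i + n).+1)%:Z)%R) (W (absz i + n).+1)).
Proof.
have h1 := leq_offset (absz i + n).+1; have h2 := size_nested (absz i + n).+1.
rewrite /subword -(mkseq_nth_drop d); last by lia.
apply/eq_in_map => k; rewrite mem_iota => /andP[_ Hk].
by rewrite (nested_limitE (M := (absz i + n).+1)); [congr nth | ]; lia.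
Qed.

Hypothesis W_legal : forall i, legal th (W i).

Lemma nested_limit_RS : in_RS_subshift th nested_limit.
Proof.
move=> i n; rewrite subword_nested_limit; apply: legal_infix (W_legal _) _.
set b := absz _; rewrite -[X in infix _ X](cat_take_drop b).
by apply: infix_catl; apply: infix_take.
Qed.

Lemma lang_infix_nested u : infix u R -> lang th u.
Proof.
move/infixP=> [s1 [s2 E]]; exists nested_limit; split; first exact: nested_limit_RS.
exists (Posz (size s1)); rewrite subword_nested_limit.
change (absz (Posz (size s1))) with (size s1).
have [Pre [Suf [E1 E2]]] := nested_decomp 0 (size s1 + size u).+1.
rewrite addn0 in E1 E2; rewrite E1 E.
have -> : absz ((size s1)%:Z + (offset (size s1 + size u).+1)%:Z)%R
    = size Pre + size s1 by rewrite -E2 [offset 0]/=; lia.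
rewrite -catA addnC -drop_drop drop_size_cat // drop_size_cat //.
by rewrite -catA take_size_cat.
Qed.

End NestedWords.

Definition hits_at (A : eqType) (th : rsubst A) (S : seq (seq A)) v p :=
  exists T1 s T2, [/\ in_subst th v (T1 ++ s ++ T2), size T1 = p & s \in S].

Section HitsAt.
Variables (A : eqType) (th : rsubst A) (S : seq (seq A)).

Lemma hits_at_catl u u' v p :
  in_subst th u u' -> hits_at th S v p -> hits_at th S (u ++ v) (size u' + p).
Proof.
move=> Hu [T1 [s [T2 [Hv <- Hs]]]]; exists (u' ++ T1), s, T2.
by rewrite size_cat -catA; split => //; apply: in_subst_cat.
Qed.

Lemma hits_at_catr u v v' p :
  hits_at th S u p -> in_subst th v v' -> hits_at th S (u ++ v) p.
Proof.
move=> [T1 [s [T2 [Hu Hp Hs]]]] Hv; exists T1, s, (T2 ++ v').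
split => //; have -> : T1 ++ s ++ T2 ++ v' = (T1 ++ s ++ T2) ++ v' by rewrite !catA.
exact: in_subst_cat.
Qed.

Lemma hits_at_images l u p :
  has (fun t => (p <= size t) && (take l (drop p t) \in S)) (images th u) ->
  hits_at th S u p.
Proof.
case/hasP => t /in_subst_images Ht /andP[Hp Hs].
exists (take p t), (take l (drop p t)), (drop l (drop p t)).
by rewrite !cat_take_drop size_takel.
Qed.

End HitsAt.

Section MarginalSubstitution.
Variables (A : eqType) (th : rsubst A) (rho : A -> seq A) (a0 : A).
Variables (ps : nat) (P0 S0 : seq A) (S : seq (seq A)) (l : nat).
Hypothesis rho_mem : forall c, rho c \in th c.
Hypothesis rho_head : forall c, exists t, rho c = a0 :: t.

Lemma rho_nonempty c : 0 < size (rho c).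
Proof. by have [t ->] := rho_head c. Qed.

Hypothesis a0_inner : iter ps (dsub rho) [:: a0] = P0 ++ a0 :: S0.
Hypothesis P0_nonempty : 0 < size P0.
Hypothesis S0_nonempty : 0 < size S0.

Lemma lang_in_subst_iter K R u :
  in_subst_iter th K [:: a0] R -> infix u R -> lang th u.
Proof.
move=> HR Hu.
pose Pf i := iter (K + i * ps) (dsub rho) P0.
pose Sf i := iter (K + i * ps) (dsub rho) S0.
have nest_image i :
    in_subst_iter th K (iter (i * ps) (dsub rho) [:: a0]) (nest R Pf Sf i).
  elim: i => //= i IH.
  rewrite mulSnr iterD a0_inner -cat1s !iter_dsub_cat /Pf /Sf !iterD.
  by do 2?apply: in_subst_iter_cat => //; apply: in_subst_iter_dsub.
apply: (lang_infix_nested a0 (Pf := Pf) (Sf := Sf)) Hu.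
- by move=> i; apply: leq_trans P0_nonempty (size_iter_dsub rho_nonempty _ _).
- by move=> i; apply: leq_trans S0_nonempty (size_iter_dsub rho_nonempty _ _).
move=> i; exists (K + i * ps), a0, (nest R Pf Sf i); split; last exact: infix_refl.
exact: in_subst_iterD (in_subst_iter_dsub rho_mem _ _) (nest_image i).
Qed.

Hypothesis letters_in : forall c, c \in iter 2 (dsub rho) [:: a0].

Lemma legal_subst_decomp w : legal th w -> exists k v1 v,
  [/\ in_subst_iter th k.+1 [:: a0] v1, in_subst th v1 v & infix w v].
Proof.
move=> [K [c [R [HR Hw]]]].
have [E1 [E2 HE]] : exists E1 E2, iter 2 (dsub rho) [:: a0] = E1 ++ c :: E2.
  by case/splitPr: (letters_in c) => E1 E2; exists E1, E2.
have : in_subst_iter th (K + 2) [:: a0]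
    (iter K (dsub rho) E1 ++ R ++ iter K (dsub rho) E2).
  apply: in_subst_iterD (in_subst_iter_dsub rho_mem _ _) _.
  rewrite HE -cat1s; do 2?apply: in_subst_iter_cat => //; exact: in_subst_iter_dsub.
rewrite addn2 => -[v1 [Hv1 Hv]]; exists K, v1; eexists; split; [exact: Hv1 | exact: Hv |].
by apply: infix_trans Hw _; apply: infix_catl; apply: prefix_infix.
Qed.

Lemma legal_lang w : legal th w -> lang th w.
Proof.
case/legal_subst_decomp => k [v1 [v [Hv1 Hv Hw]]].
by apply: (@lang_in_subst_iter k.+2 v) Hw; exists v1.
Qed.

Hypothesis rho_a0_long : 1 < size (rho a0).

Lemma iter_dsub_a0 j : exists D, iter j (dsub rho) [:: a0] = a0 :: D /\ j <= size D.
Proof.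
elim: j => [|j [D [E HD]]]; first by exists [::].
have [t Ht] := rho_head a0; move: rho_a0_long; rewrite Ht /= => Ht1.
exists (t ++ dsub rho D); rewrite /= E dsub_cons Ht size_cat.
by split => //; have := size_dsub rho_nonempty D; lia.
Qed.

Hypothesis l_gt1 : 1 < l.
Hypothesis hits_local : forall y r p,
  p < size (dsub rho (rho y)) -> hits_at th S (rho y ++ a0 :: r) p.

Lemma hits_at_dsub Y p : p + l <= size Y -> hits_at th S (dsub rho Y) p.
Proof.
have Hl := l_gt1; elim: Y p => [|y Y IH] p /= Hp; first by lia.
rewrite dsub_cons; case: (ltnP p (size (dsub rho (rho y)))) => Hpy.
  case: Y {IH} Hp => [|y' Y] Hp; first by move: Hp => /=; lia.
  by have [t Et] := rho_head y'; rewrite dsub_cons Et; apply: hits_local.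
have := leq_trans (rho_nonempty y) (size_dsub rho_nonempty (rho y)).
rewrite -(subnKC Hpy) => Hy; apply: hits_at_catl (in_subst_dsub rho_mem _) _.
by apply: IH; move: Hp => /=; lia.
Qed.

Lemma lang_extend_gap w : lang th w -> exists N, forall n, N <= n ->
  exists u s, [/\ size u = n, s \in S & lang th (w ++ u ++ s)].
Proof.
move=> /lang_legal /legal_subst_decomp [k [v1 [v [Hv1 Hv /infixP[vp [vs Ev]]]]]].
exists (size vs) => n Hn; set p := n - size vs.
have [D [ED HD]] := iter_dsub_a0 (p + l).
have HY := leq_trans HD (size_iter_dsub rho_nonempty k D).
have [T1 [s [T2 [HT HT1 Hs]]]] := hits_at_dsub HY.
exists (vs ++ T1), s; split => //; first by rewrite size_cat HT1; lia.
apply: legal_lang; exists (k.+2 + (p + l)), a0, (v ++ T1 ++ s ++ T2); split.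
  apply: in_subst_iterD (in_subst_iter_dsub rho_mem _ _) _.
  rewrite ED -cat1s; exists (v1 ++ dsub rho (iter k (dsub rho) D)); split.
    by apply: in_subst_iter_cat => //; apply: (in_subst_iter_dsub rho_mem k.+1).
  exact: in_subst_cat.
by rewrite Ev -!catA; apply: infix_catl; rewrite !catA; apply: prefix_infix.
Qed.

Theorem semi_mixing_marginal :
  (forall s, s \in S -> size s = l /\ legal th s) ->
  (exists w, [/\ size w = l, legal th w & w \notin S]) ->
  semi_mixing_wrt th S.
Proof.
move=> HS [w [Hw Hlw HwS]]; exists l; split; last split.
- by move=> s /HS [Hs Hls]; split => //; apply: legal_lang.
- by exists w; do !split => //; apply: legal_lang.
- exact: lang_extend_gap.
Qed.

End MarginalSubstitution.

Definition fib_rho (c : ab) : seq ab :=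
  if c is a_ then [:: a_; b_] else [:: a_].

Lemma fib_semi_mixing : semi_mixing_wrt fib_subst [:: [:: a_; b_]; [:: b_; a_]].
Proof.
have rho_mem c : fib_rho c \in fib_subst c by case: c.
apply: (semi_mixing_marginal (rho := fib_rho) (a0 := a_) (ps := 3)
  (P0 := [:: a_; b_]) (S0 := [:: a_; b_]) (l := 2)) => //.
- by case; eexists.
- by case.
- move=> y r p Hp; rewrite -cat_rcons; apply: hits_at_catr (in_subst_dsub rho_mem r).
  by apply: (hits_at_images (l := 2)); move: y p Hp => [] [|[|[|p]]].
- move=> s; rewrite !inE => /orP[] /eqP ->; split => //;
    by apply: (legal_iter_images (k := 1) (c := a_)).
- by exists [:: a_; a_]; split => //; apply: (legal_iter_images (k := 2) (c := a_)).
Qed.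

Definition trib_rho (c : abc) : seq abc :=
  match c with a3 => [:: a3; b3] | b3 => [:: a3; c3] | c3 => [:: a3] end.

Lemma trib_semi_mixing : semi_mixing_wrt trib_subst
  [:: [:: a3; b3]; [:: b3; a3]; [:: a3; c3]; [:: c3; a3]].
Proof.
have rho_mem c : trib_rho c \in trib_subst c by case: c.
apply: (semi_mixing_marginal (rho := trib_rho) (a0 := a3) (ps := 3)
  (P0 := [:: a3; b3]) (S0 := [:: c3; a3; b3; a3]) (l := 2)) => //.
- by case; eexists.
- by case.
- move=> y r p Hp; rewrite -cat_rcons; apply: hits_at_catr (in_subst_dsub rho_mem r).
  by apply: (hits_at_images (l := 2)); move: y p Hp => [] [|[|[|[|p]]]].
- move=> s; rewrite !inE => /orP[|/orP[|/orP[]]] /eqP ->; split => //;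
    by apply: (legal_iter_images (k := 2) (c := a3)); compute.
- exists [:: a3; a3]; split => //.
  by apply: (legal_iter_images (k := 3) (c := a3)); compute.
Qed.

Definition metallic_rho (m : nat) (c : ab) : seq ab :=
  if c is a_ then nseq m a_ ++ [:: b_] else [:: a_].

Lemma nseqSr (T : Type) n (x : T) : x :: nseq n x = nseq n x ++ [:: x].
Proof. by rewrite -[x :: _]/(nseq n.+1 x) -addn1 nseqD. Qed.

Section Metallic.
Variable m : nat.
Local Notation th := (metallic_subst m).
Local Notation rho := (metallic_rho m).
Local Notation S := (metallic_words m).

Lemma metallic_words_mem i :
  i <= m -> nseq i a_ ++ b_ :: nseq (m - i) a_ \in S.
Proof. by move=> Hi; apply/mapP; exists i => //; rewrite mem_iota. Qed.

Lemma metallic_rho_mem c : rho c \in th c.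
Proof. by case: c => //=; have := metallic_words_mem (leqnn m); rewrite subnn. Qed.

Lemma size_dsub_metallic_nseq k : size (dsub rho (nseq k a_)) = k * m.+1.
Proof. by elim: k => //= k IH; rewrite size_cat IH size_cat size_nseq addn1. Qed.

Lemma metallic_hits_head w rest p : p <= m ->
  in_subst th w (nseq m a_ ++ rest) -> hits_at th S (a_ :: w) p.
Proof.
move=> Hp Hw; exists (nseq p a_), (nseq (m - p) a_ ++ b_ :: nseq p a_),
  (nseq (m - p) a_ ++ rest); split; last 2 first.
- by rewrite size_nseq.
- by rewrite -{2}(subKn Hp) metallic_words_mem ?leq_subr.
suff -> : nseq p a_ ++ (nseq (m - p) a_ ++ b_ :: nseq p a_) ++ nseq (m - p) a_ ++ rest
    = rho a_ ++ nseq m a_ ++ rest by apply: in_subst_cons (metallic_rho_mem _) Hw.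
by rewrite /= -!catA catA -nseqD subnKC //= catA -nseqD subnKC.
Qed.

Lemma dsub_metallic_head k r :
  exists rest, dsub rho (nseq k a_ ++ b_ :: a_ :: r) = nseq m a_ ++ rest.
Proof.
case: k => [|k] /=; rewrite !dsub_cons /= -catA; last by eexists.
by exists (a_ :: b_ :: dsub rho r); rewrite -cat_cons nseqSr -catA.
Qed.

Hypothesis m_gt0 : 0 < m.

Lemma metallic_hits_ba r : hits_at th S (b_ :: a_ :: r) 0.
Proof.
exists [::], (nseq 1 a_ ++ b_ :: nseq (m - 1) a_), (a_ :: dsub rho r); split => //.
- have -> : [::] ++ (nseq 1 a_ ++ b_ :: nseq (m - 1) a_) ++ a_ :: dsub rho r
      = [:: a_] ++ (b_ :: nseq m a_) ++ dsub rho r.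
    have Em : nseq m a_ = nseq (m - 1) a_ ++ [:: a_].
      by rewrite -nseqSr -[in LHS](subnK m_gt0) addn1.
    by rewrite Em /= -catA.
  apply: in_subst_cons => //; apply: in_subst_cons (in_subst_dsub metallic_rho_mem r).
  by have := metallic_words_mem (leq0n m); rewrite subn0.
- exact: metallic_words_mem.
Qed.

Lemma metallic_hits_local y r p :
  p < size (dsub rho (rho y)) -> hits_at th S (rho y ++ a_ :: r) p.
Proof.
case: y => /=; last first.
  rewrite -[[:: a_]]/(nseq 1 a_) size_dsub_metallic_nseq mul1n ltnS => Hp.
  apply: (metallic_hits_head (rest := b_ :: dsub rho r)) Hp _.
  by have := in_subst_dsub metallic_rho_mem (a_ :: r); rewrite dsub_cons -catA.
rewrite dsub_cat size_cat size_dsub_metallic_nseq addn1.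
rewrite ltnS leq_eqVlt -catA cat1s => /orP[/eqP -> | Hp].
  rewrite -[X in hits_at _ _ _ X]addn0 -(size_dsub_metallic_nseq m).
  exact: hits_at_catl (in_subst_dsub metallic_rho_mem _) (metallic_hits_ba r).
(* Position [p] lies in the [j]-th block of [rho (rho a) = (a^m b)^m a]. *)
set j := p %/ m.+1; set o := p %% m.+1.
have Hj : j < m by rewrite ltn_divLR.
have Ho : o <= m by rewrite -ltnS ltn_mod.
have Em : nseq m a_ = nseq j a_ ++ a_ :: nseq (m - j.+1) a_.
  by rewrite -[a_ :: _]/(nseq (m - j.+1).+1 a_) -nseqD; congr nseq; lia.
have Ep : p = size (dsub rho (nseq j a_)) + o.
  by rewrite size_dsub_metallic_nseq {1}(divn_eq p m.+1).
have [rest Erest] := dsub_metallic_head (m - j.+1) r.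
rewrite Em Ep -catA; apply: hits_at_catl (in_subst_dsub metallic_rho_mem _) _.
apply: (metallic_hits_head (rest := rest)) Ho _; rewrite -Erest.
exact: in_subst_dsub metallic_rho_mem _.
Qed.

End Metallic.

Lemma metallic_semi_mixing m : 2 <= m ->
  semi_mixing_wrt (metallic_subst m) (metallic_words m).
Proof.
case: m => [|[|n]] // _.
apply: (semi_mixing_marginal (rho := metallic_rho n.+2) (a0 := a_) (ps := 1)
  (P0 := [:: a_]) (S0 := nseq n a_ ++ [:: b_]) (l := n.+3)) => //.
- exact: metallic_rho_mem.
- by case; eexists.
- by rewrite /= dsub_cons cats0.
- by rewrite size_cat addn1.
- by move=> c; rewrite /= dsub_cons mem_cat; case: c; rewrite /= ?inE ?mem_cat ?inE ?orbT.
- exact: metallic_hits_local.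
- move=> s Hs; split; last exact: (legal_image_letter (c := a_) Hs).
  move: Hs => /mapP[i]; rewrite mem_iota => /andP[_ Hi] ->.
  by rewrite size_cat /= !size_nseq; lia.
- exists (nseq n.+3 a_); split; first by rewrite size_nseq.
  + exists 2, a_, (a_ :: dsub (metallic_rho n.+2) (nseq n.+2 a_)); split; last first.
      by rewrite dsub_cons -catA; apply: prefix_infix.
    exists (b_ :: nseq n.+2 a_); split.
      apply/in_subst_iter1/in_subst_letter.
      by have := metallic_words_mem (leq0n n.+2); rewrite subn0.
    exact: (in_subst_cons (p := [:: a_])) (in_subst_dsub (metallic_rho_mem _) _).
  + apply/mapP => -[i _] E.
    have : b_ \in nseq n.+3 a_ by rewrite E mem_cat inE eqxx orbT.
    by rewrite mem_nseq.
Qed.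

Theorem mainTheorem1 (m : nat) (hm : 2 <= m) :
  [/\ semi_mixing_wrt fib_subst [:: [:: a_; b_]; [:: b_; a_]],
      semi_mixing_wrt trib_subst
        [:: [:: a3; b3]; [:: b3; a3]; [:: a3; c3]; [:: c3; a3]]
    & semi_mixing_wrt (metallic_subst m) (metallic_words m)].
Proof.
split; [exact: fib_semi_mixing | exact: trib_semi_mixing | exact: metallic_semi_mixing].
Qed.
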